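(* Let $\eta:\mathbb{R}^d\to\mathbb{R}$ be a twice differentiable convex function. Then $\eta$ satisfies the design condition for a general conservation law if and only if it satisfies the homogeneity property $$\mathbf{v}\cdot\frac{\partial\eta}{\partial\mathbf{v}}(\mathbf{v})=\eta(\mathbf{v})\quad\text{for all }\mathbf{v}\in\mathbb{R}^d.$$
   Context: For a smooth flux $\mathbf{f}:\mathbb{R}\to\mathbb{R}^d$ and a smooth solution $\phi$ of $\partial_t\phi+\nabla\cdot\mathbf{f}(\phi)=0$ on $\Omega\times(0,T)$, $\Omega\subset\mathbb{R}^d$, define the non-conservative term $\mathscr{A}=(\mathbf{H}_{\nabla\phi}\eta\,\nabla\phi)\cdot(\mathbf{H}_{\mathbf{x}}\phi\,\frac{\partial\mathbf{f}}{\partial\phi})$, where $\mathbf{H}_{\mathbf{x}}\phi$ is the spatial Hessian of $\phi$, $\mathbf{H}_{\nabla\phi}\eta$ is the Hessian of $\eta$ with respect to its argument evaluated at $\nabla\phi$, and $\frac{\partial\mathbf{f}}{\partial\phi}=\mathbf{f}'(\phi)$. The function $\eta$ satisfies the design condition (for a general conservation law) if $\eta$ is convex, $\eta(\mathbf{0})=0$, and $\mathscr{A}=0$ for every smooth flux $\mathbf{f}$ and every smooth solution $\phi$ of the corresponding conservation law. *)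

From HB Require Import structures.
From mathcomp Require Import all_boot all_order all_algebra.
From mathcomp Require Import all_classical all_reals.
From mathcomp Require Import topology normedtype derive convex.
Set Implicit Arguments. Unset Strict Implicit. Unset Printing Implicit Defensive.
Import Order.TTheory GRing.Theory Num.Theory.
Import numFieldNormedType.Exports.
Local Open Scope classical_set_scope.
Local Open Scope ring_scope.

(* C^n regularity on a set U (intended: U open), via iterated directional
   (Frechet) derivatives:  C^0 = continuous at every point of U;
   C^{n+1} = differentiable at every point of U and every directional
   derivative 'D_v g is C^n on U. *)
Fixpoint Ck_on (K : realType) (V W : normedModType K) (n : nat)
    (U : set V) (g : V -> W) : Prop :=
  match n with
  | 0%N => forall x, U x -> {for x, continuous g}
  | n'.+1 => (forall x, U x -> differentiable g x) /\
             (forall v : V, Ck_on n' U (fun y => 'D_v g y))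
  end.

Definition smooth_on (K : realType) (V W : normedModType K)
    (U : set V) (g : V -> W) : Prop := forall n, Ck_on n U g.

Definition ev (K : realType) (d : nat) (i : 'I_d) : 'rV[K]_d := delta_mx 0 i.

Definition pd (K : realType) (d : nat) (eta : 'rV[K]_d -> K) (i : 'I_d)
    (v : 'rV[K]_d) : K := 'D_(@ev K d i) eta v.
Definition grad (K : realType) (d : nat) (eta : 'rV[K]_d -> K)
    (v : 'rV[K]_d) : 'rV[K]_d := \row_i pd eta i v.
Definition hess (K : realType) (d : nat) (eta : 'rV[K]_d -> K)
    (v : 'rV[K]_d) : 'M[K]_d := \matrix_(i, j) pd (pd eta i) j v.

Definition twice_differentiable (K : realType) (d : nat)
    (eta : 'rV[K]_d -> K) : Prop :=
  (forall v, differentiable eta v) /\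
  (forall i v, differentiable (pd eta i) v).

Definition convex_on_Rd (K : realType) (d : nat) (eta : 'rV[K]_d -> K) : Prop :=
  convex_function (setT : set (convex_lmodType 'rV[K]_d)) eta.

(* Space-time points p = (x, t) in R^d x R. *)
Definition pdx (K : realType) (d : nat) (g : 'rV[K]_d * K -> K) (i : 'I_d)
    (p : 'rV[K]_d * K) : K := 'D_((@ev K d i, 0) : 'rV[K]_d * K) g p.
Definition pdt (K : realType) (d : nat) (g : 'rV[K]_d * K -> K)
    (p : 'rV[K]_d * K) : K := 'D_((0, 1) : 'rV[K]_d * K) g p.

Definition cyl (K : realType) (d : nat) (Om : set 'rV[K]_d) (T : K)
    : set ('rV[K]_d * K) := [set p | Om p.1 /\ 0 < p.2 < T].

Definition solves (K : realType) (d : nat) (f : K -> 'rV[K]_d)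
    (phi : 'rV[K]_d * K -> K) (U : set ('rV[K]_d * K)) : Prop :=
  forall p, U p ->
    pdt phi p + \sum_(i < d) pdx (fun q => f (phi q) 0 i) i p = 0.

Definition gradx (K : realType) (d : nat) (phi : 'rV[K]_d * K -> K)
    (p : 'rV[K]_d * K) : 'rV[K]_d := \row_i pdx phi i p.
Definition hessx (K : realType) (d : nat) (phi : 'rV[K]_d * K -> K)
    (p : 'rV[K]_d * K) : 'M[K]_d := \matrix_(i, j) pdx (pdx phi i) j p.

Definition Aterm (K : realType) (d : nat) (eta : 'rV[K]_d -> K)
    (f : K -> 'rV[K]_d) (phi : 'rV[K]_d * K -> K) (p : 'rV[K]_d * K) : K :=
  let g := gradx phi p in
  let fp := 'D_1 f (phi p) in
  \sum_(i < d) ((\sum_(j < d) hess eta g i j * g 0 j) *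
                (\sum_(k < d) hessx phi p i k * fp 0 k)).

Definition design_condition (K : realType) (d : nat) (Om : set 'rV[K]_d)
    (T : K) (eta : 'rV[K]_d -> K) : Prop :=
  convex_on_Rd eta /\ eta 0 = 0 /\
  forall (f : K -> 'rV[K]_d) (phi : 'rV[K]_d * K -> K),
    smooth_on setT f -> smooth_on (cyl Om T) phi -> solves f phi (cyl Om T) ->
    forall p, cyl Om T p -> Aterm eta f phi p = 0.

Definition homogeneity (K : realType) (d : nat) (eta : 'rV[K]_d -> K) : Prop :=
  forall v : 'rV[K]_d, \sum_(i < d) v 0 i * pd eta i v = eta v.

From HB Require Import structures.
From mathcomp Require Import all_boot all_order all_algebra.
From mathcomp Require Import all_classical all_reals.
From mathcomp Require Import topology normedtype derive convex.
From mathcomp Require Import ring lra.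
Import Order.TTheory GRing.Theory Num.Theory.
Import numFieldNormedType.Exports.
Local Open Scope classical_set_scope.
Local Open Scope ring_scope.

(* If [eta] is homogeneous, then [G t = v . grad eta (t v)] satisfies
   [t G t = eta (t v)]; differentiating gives [t G' t = 0], so [G] is constant
   on [0, 1] and [eta v = v . grad eta 0]: [eta] is linear, its Hessian
   vanishes and so does the non-conservative term.
   Conversely, given [w] and an index [k], the flux [f r = r e_k] and
   [phi (x, t) = w . x - t w_k + (x_k - t - s)^2 / 2] solve the conservation
   law everywhere; at a point with [x_k - t = s] we have [grad phi = w],
   [H_x phi = e_k e_k^T] and [f' = e_k], so the term reduces to
   [(H eta (w) w)_k].  The design condition thus forces [H eta (w) w = 0] for
   all [w]; along rays this makes [grad eta] constant, whence
   [eta v = eta 0 + v . grad eta 0 = v . grad eta v]. *)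

Section Calculus.
Context {R : realType}.

Lemma differentiable_fst (U V : normedModType R) (q : U * V) :
  differentiable fst q.
Proof.
have fst_linear : linear (@fst U V) by [].
pose fstL : {linear (U * V)%type -> U} :=
  HB.pack (@fst U V) (GRing.isLinear.Build _ _ _ _ _ fst_linear).
have -> : @fst U V = fstL by [].
by apply: linear_differentiable => x; exact: cvg_fst.
Qed.

Lemma differentiable_snd (U V : normedModType R) (q : U * V) :
  differentiable snd q.
Proof.
have snd_linear : linear (@snd U V) by [].
pose sndL : {linear (U * V)%type -> V} :=
  HB.pack (@snd U V) (GRing.isLinear.Build _ _ _ _ _ snd_linear).
have -> : @snd U V = sndL by [].
by apply: linear_differentiable => x; exact: cvg_snd.
Qed.

Lemma differentiable_sumf (V W : normedModType R) n (F : 'I_n -> V -> W) x :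
  (forall i, differentiable (F i) x) ->
  differentiable (fun y => \sum_(i < n) F i y) x.
Proof.
move=> dF; rewrite (_ : (fun y => _) = \sum_(i < n) F i).
  exact: differentiable_sum.
by apply/funext => y; rewrite fct_sumE.
Qed.

Lemma is_derive_quadratic {V W : normedModType R} {f : V -> W} {x u : V} {A : W}
    (B : W) :
  (forall h : R, f (h *: u + x) = f x + h *: A + h ^+ 2 *: B) ->
  is_derive x u f A.
Proof.
move=> fE.
have quotE : {near 0^', (fun h : R => A + h *: B) =1
    (fun h => h^-1 *: ((f \o shift x) (h *: u) - f x))}.
  near=> h.
  have hN0 : h != 0 by near: h; exact: nbhs_dnbhs_neq.
  rewrite /= fE -[f x + _ + _]addrA addrC addrK expr2 -scalerA -scalerDr.
  by rewrite scalerA mulVf // scale1r.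
have quot_cvg : (fun h => h^-1 *: ((f \o shift x) (h *: u) - f x)) @ 0^' --> A.
  apply: cvg_trans (near_eq_cvg quotE) _.
  suff : (fun h : R => A + h *: B) @ 0^' --> A + 0 *: B.
    by rewrite scale0r addr0.
  apply: (@continuous_withinNx _ _ (fun h : R => A + h *: B) 0).1.
  by apply: continuousD; [exact: cst_continuous | exact: scalel_continuous].
split; first by apply/cvg_ex; exists A.
exact: cvg_lim quot_cvg.
Unshelve. all: by end_near.
Qed.

Lemma is_derive_quadraticR {V : normedModType R} {f : V -> R} {x u : V} {A : R}
    (B : R) :
  (forall h : R, f (h *: u + x) = f x + h * A + h ^+ 2 * B) ->
  is_derive x u f A.
Proof. exact: is_derive_quadratic. Qed.

Lemma derive_eq0_ends (h : R -> R) {a b : R} : a < b ->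
  (forall t, derivable h t 1) -> (forall t, a < t < b -> 'D_1 h t = 0) ->
  h b = h a.
Proof.
move=> ab dh h0.
have [||c] := @MVT R h ('D_1 h) a b ab.
- by move=> x _; apply: derivableP.
- apply: continuous_subspaceT => x.
  exact/differentiable_continuous/derivable1_diffP.
- rewrite in_itv /= => /h0 ->.
  by rewrite mul0r => /eqP; rewrite subr_eq0 => /eqP.
Qed.

Lemma is_derive_ray {V : normedModType R} {F : V -> R} {v : V} {t : R} :
  differentiable F (t *: v) ->
  is_derive t 1 (fun s : R => F (s *: v)) ('D_v F (t *: v)).
Proof.
move=> dF; have {}dF : derivable F (t *: v) v by exact: diff_derivable.
have quotE : (fun h : R => h^-1 *: (((fun s : R => F (s *: v)) \o shift t)
               (h *: 1) - F (t *: v))) =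
             (fun h : R =>
                h^-1 *: ((F \o shift (t *: v)) (h *: v) - F (t *: v))).
  by apply/funext => h /=; rewrite scalerDl [h *: 1]mulr1.
by split; rewrite /derivable /derive quotE.
Qed.

Fixpoint iterD_const {V W : normedModType R} (k : nat) (g : V -> W) : Prop :=
  match k with
  | 0%N => exists c, g = cst c
  | k'.+1 => (forall x, differentiable g x) /\
             forall v, iterD_const k' (fun y => 'D_v g y)
  end.

Lemma iterD_const_smooth (V W : normedModType R) k (U : set V) (g : V -> W) :
  iterD_const k g -> smooth_on U g.
Proof.
move=> gk n; elim: n k g gk => [|n IH] [|k] g /=.
- by case=> c -> x _; exact: cst_continuous.
- by case=> dg _ x _; exact: differentiable_continuous.
- case=> c ->; split=> [x _|v]; first exact: differentiable_cst.
  by apply: (IH 0%N); exists 0; apply/funext => y; exact: derive_cst.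
- by case=> dg dgk; split=> [x _|v]; [exact: dg | exact: IH (dgk v)].
Qed.

End Calculus.

Section Rows.
Context {R : realType} {d : nat}.

Lemma evE (i j : 'I_d) : ev R i 0 j = (i == j)%:R.
Proof. by rewrite /ev mxE eq_sym. Qed.

Lemma sum_evE (i : 'I_d) (c : 'I_d -> R) : \sum_(j < d) ev R i 0 j * c j = c i.
Proof.
rewrite (bigD1 i) //= big1 => [|j ji]; first by rewrite evE eqxx mul1r addr0.
by rewrite evE eq_sym (negbTE ji) mul0r.
Qed.

Lemma derive_pdE (f : 'rV[R]_d -> R) x v : differentiable f x ->
  'D_v f x = \sum_(i < d) v 0 i * pd f i x.
Proof.
move=> df; rewrite deriveE // {1}(row_sum_delta v) linear_sum.
by apply: eq_bigr => i _; rewrite linearZ /= /pd deriveE.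
Qed.

Lemma pd_lin_form (c : 'I_d -> R) i x :
  pd (fun v => \sum_(j < d) v 0 j * c j) i x = c i.
Proof.
rewrite /pd; apply: derive_val; apply: (is_derive_quadraticR 0) => h.
rewrite mulr0 addr0 -(sum_evE i c) mulr_sumr -big_split /=.
by apply: eq_bigr => j _; rewrite !mxE; ring.
Qed.

Lemma hess_lin_form (c : 'I_d -> R) x i j :
  hess (fun v => \sum_(k < d) v 0 k * c k) x i j = 0.
Proof.
rewrite /hess mxE (_ : pd _ i = cst (c i)); first by rewrite /pd derive_cst.
by apply/funext => y; exact: pd_lin_form.
Qed.

Lemma differentiable_fst_coord (V : normedModType R) j (q : 'rV[R]_d * V) :
  differentiable (fun q : 'rV[R]_d * V => q.1 0 j) q.
Proof.
have -> : (fun q : 'rV[R]_d * V => q.1 0 j) = (fun N : 'rV_d => N 0 j) \o fst.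
  by [].
apply: differentiable_comp; first exact: differentiable_fst.
exact: differentiable_coord.
Qed.

End Rows.

Section TestSolution.
Context {R : realType} {d : nat} (w : 'rV[R]_d) (k : 'I_d) (s : R).
Local Notation P := ('rV[R]_d * R)%type.

Definition test_lin (u : P) : R := \sum_(j < d) w 0 j * u.1 0 j - u.2 * w 0 k.
Definition char_lin (u : P) : R := u.1 0 k - u.2.
Definition test_phi (q : P) : R := test_lin q + (char_lin q - s) ^+ 2 / 2.
Definition test_Dphi (u q : P) : R :=
  test_lin u + (char_lin q - s) * char_lin u.
Definition test_flux (r : R) : 'rV[R]_d := r *: ev R k.

Lemma test_linE h u q : test_lin (h *: u + q) = h * test_lin u + test_lin q.
Proof.
rewrite /test_lin; have -> : (h *: u + q).2 = h * u.2 + q.2 by [].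
rewrite (eq_bigr (fun j => h * (w 0 j * u.1 0 j) + w 0 j * q.1 0 j)).
  by rewrite big_split /= -mulr_sumr; ring.
by move=> j _; rewrite !mxE; ring.
Qed.

Lemma char_linE h u q : char_lin (h *: u + q) = h * char_lin u + char_lin q.
Proof.
rewrite /char_lin; have -> : (h *: u + q).2 = h * u.2 + q.2 by [].
by rewrite !mxE; ring.
Qed.

Global Instance is_derive_test_phi u q : is_derive q u test_phi (test_Dphi u q).
Proof.
apply: (is_derive_quadraticR (char_lin u ^+ 2 / 2)) => h.
by rewrite /test_phi /test_Dphi test_linE char_linE; field.
Qed.

Global Instance is_derive_test_Dphi u u' q :
  is_derive q u' (test_Dphi u) (char_lin u' * char_lin u).
Proof.
apply: (is_derive_quadraticR 0) => h.
by rewrite /test_Dphi char_linE; ring.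
Qed.

Lemma differentiable_test_lin q : differentiable test_lin q.
Proof.
apply: differentiableB.
  apply: differentiable_sumf => j; apply: differentiableM.
    exact: differentiable_cst.
  exact: differentiable_fst_coord.
apply: differentiableM; first exact: differentiable_snd.
exact: differentiable_cst.
Qed.

Lemma differentiable_char_lin q : differentiable char_lin q.
Proof.
apply: differentiableB; first exact: differentiable_fst_coord.
exact: differentiable_snd.
Qed.

Lemma test_phi_iterD_const : iterD_const 2 test_phi.
Proof.
split=> [q|v].
  apply: differentiableD; first exact: differentiable_test_lin.
  apply: differentiableM; last exact: differentiable_cst.
  have dchar : differentiable (fun q => char_lin q - s) q.
    apply: differentiableB; first exact: differentiable_char_lin.
    exact: differentiable_cst.
  by under eq_fun do rewrite expr2; exact: differentiableM.
have -> : (fun q => 'D_v test_phi q) = test_Dphi v.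
  by apply/funext => q; rewrite derive_val.
split=> [q|u].
  apply: differentiableD; first exact: differentiable_cst.
  apply: differentiableM; last exact: differentiable_cst.
  apply: differentiableB; last exact: differentiable_cst.
  exact: differentiable_char_lin.
by exists (char_lin u * char_lin v); apply/funext => q; rewrite derive_val.
Qed.

Global Instance is_derive_test_flux r v : is_derive r v test_flux (v *: ev R k).
Proof.
apply: (is_derive_quadratic 0) => h.
by rewrite /test_flux scaler0 addr0 scalerDl scalerA addrC.
Qed.

Lemma test_flux_iterD_const : iterD_const 1 test_flux.
Proof.
split=> [r|v].
  by apply: differentiableZl; apply/derivable1_diffP; exact: derivable_id.
by exists (v *: ev R k); apply/funext => r; rewrite derive_val.
Qed.

Lemma pdx_test_phi i q :
  pdx test_phi i q = w 0 i + (char_lin q - s) * ev R k 0 i.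
Proof.
rewrite /pdx derive_val /test_Dphi /test_lin /char_lin /= mul0r subr0 subr0.
rewrite [ev R i 0 k]evE [ev R k 0 i]evE eq_sym.
by rewrite (eq_bigr _ (fun j _ => mulrC _ _)) sum_evE.
Qed.

Lemma pdx_pdx_test_phi i j q :
  pdx (pdx test_phi i) j q = ev R k 0 j * ev R k 0 i.
Proof.
have -> : pdx test_phi i = test_Dphi (ev R i, 0).
  by apply/funext => y; rewrite /pdx derive_val.
by rewrite /pdx derive_val /char_lin /= !evE !subr0 (eq_sym j) (eq_sym i).
Qed.

Lemma pdt_test_phi q : pdt test_phi q = - w 0 k - (char_lin q - s).
Proof.
rewrite /pdt derive_val /test_Dphi /test_lin /char_lin /= big1 => [|j _].
  by rewrite mxE; ring.
by rewrite mxE mulr0.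
Qed.

Lemma test_phi_solves U : solves test_flux test_phi U.
Proof.
move=> p _.
have fluxE i : pdx (fun q => test_flux (test_phi q) 0 i) i p =
    ev R k 0 i * pdx test_phi i p.
  have -> : (fun q => test_flux (test_phi q) 0 i) = ev R k 0 i \o* test_phi.
    by apply/funext => q; rewrite /test_flux mxE.
  by rewrite /pdx deriveMr // ex_derive.
under eq_bigr do rewrite fluxE pdx_test_phi.
by rewrite sum_evE pdt_test_phi evE eqxx mulr1; ring.
Qed.

Lemma Aterm_test_phi (eta : 'rV[R]_d -> R) p : char_lin p = s ->
  Aterm eta test_flux test_phi p = \sum_(j < d) hess eta w k j * w 0 j.
Proof.
move=> ps; rewrite /Aterm.
have -> : gradx test_phi p = w.
  by apply/rowP => j; rewrite mxE pdx_test_phi ps subrr mul0r addr0.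
rewrite derive_val scale1r.
rewrite (eq_bigr (fun i => ev R k 0 i * \sum_(j < d) hess eta w i j * w 0 j)).
  by rewrite sum_evE.
move=> i _; rewrite mulrC; congr (_ * _).
under eq_bigr do rewrite mxE pdx_pdx_test_phi mulrC mulrA.
by rewrite -mulr_suml sum_evE evE eqxx mul1r.
Qed.

End TestSolution.

Lemma design_condition_hess_mul_eq0 {R : realType} {d : nat} {Om : set 'rV[R]_d}
    {T : R} {eta : 'rV[R]_d -> R} :
  Om !=set0 -> 0 < T -> design_condition Om T eta ->
  forall w i, \sum_(j < d) hess eta w i j * w 0 j = 0.
Proof.
move=> [x0 Ox0] T_gt0 [_ [_ designA]] w i.
pose p0 : 'rV[R]_d * R := (x0, T / 2).
have p0_cyl : cyl Om T p0 by split=> //=; apply/andP; split; lra.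
rewrite -(Aterm_test_phi w i (char_lin i p0) eta p0 erefl).
apply: designA p0_cyl.
- exact: iterD_const_smooth (test_flux_iterD_const _).
- exact: iterD_const_smooth (test_phi_iterD_const _ _ _).
- exact: test_phi_solves.
Qed.

Section Rays.
Context {R : realType} {d : nat} {eta : 'rV[R]_d -> R}.
Hypothesis eta_diff2 : twice_differentiable eta.

Lemma pd_const_of_hess_mul_eq0 :
  (forall w i, \sum_(j < d) hess eta w i j * w 0 j = 0) ->
  forall i v, pd eta i v = pd eta i 0.
Proof.
move=> hessw0 i v; have [_ d2] := eta_diff2.
rewrite -[v in LHS]scale1r -[0 in RHS](scale0r v).
apply: (derive_eq0_ends (fun t => pd eta i (t *: v)) ltr01).
  by move=> t; have [] := is_derive_ray (d2 i (t *: v)).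
move=> t /andP[t_gt0 _].
have [_ ->] := is_derive_ray (d2 i (t *: v)).
rewrite derive_pdE //; have := hessw0 (t *: v) i.
rewrite (eq_bigr (fun j => t * (v 0 j * pd (pd eta i) j (t *: v)))) => [|j _].
  by rewrite -mulr_sumr => /eqP; rewrite mulf_eq0 gt_eqF // => /eqP.
by rewrite /hess !mxE; ring.
Qed.

Lemma affine_of_pd_const :
  (forall i v, pd eta i v = pd eta i 0) ->
  forall v, eta v = eta 0 + \sum_(i < d) v 0 i * pd eta i 0.
Proof.
move=> pd_const v; have [d1 _] := eta_diff2.
pose C := \sum_(i < d) v 0 i * pd eta i 0.
have is_derive_linC (t : R) : is_derive t 1 (fun s : R => s * C) C.
  by apply: (is_derive_quadraticR 0) => h; rewrite [h *: 1]mulr1; ring.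
suff : eta (1 *: v) - 1 * C = eta (0 *: v) - 0 * C.
  by rewrite scale1r scale0r mul1r mul0r subr0 => /eqP; rewrite subr_eq => /eqP.
have eta_ray (t : R) := is_derive_ray (d1 (t *: v)).
apply: (derive_eq0_ends (fun t => eta (t *: v) - t * C) ltr01) => [t|t _].
  by apply: derivableB; [case: (eta_ray t) | case: (is_derive_linC t)].
rewrite deriveB; [|by case: (eta_ray t) | by case: (is_derive_linC t)].
rewrite !derive_val derive_pdE //; apply/eqP; rewrite subr_eq0; apply/eqP.
by apply: eq_bigr => i _; rewrite pd_const.
Qed.

Lemma lin_form_of_homogeneity :
  homogeneity eta -> forall v, eta v = \sum_(i < d) v 0 i * pd eta i 0.
Proof.
move=> homog v; have [d1 d2] := eta_diff2.
pose G t := \sum_(i < d) v 0 i * pd eta i (t *: v).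
have dG t : derivable G t 1.
  apply/derivable1_diffP/differentiable_sumf => i.
  apply: differentiableM; first exact: differentiable_cst.
  by apply/derivable1_diffP; case: (is_derive_ray (d2 i (t *: v))).
have GE : (fun t => t * G t) = (fun t => eta (t *: v)).
  apply/funext => t; rewrite -homog /G mulr_sumr.
  by apply: eq_bigr => i _; rewrite mxE mulrA.
suff : G 1 = G 0 by rewrite /G scale1r scale0r homog.
apply: (derive_eq0_ends G ltr01 dG) => t /andP[t_gt0 _].
have := congr1 (fun g => 'D_1 g t) GE; rewrite /= -/(G t).
rewrite (_ : (fun t => t * G t) = id * G) // deriveM //.
have [_ ->] := is_derive_ray (d1 (t *: v)).
rewrite derive_pdE // -/(G t) derive_id [_ *: 1]mulr1 => /eqP.
by rewrite -subr_eq0 addrK mulf_eq0 gt_eqF //= => /eqP.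
Qed.

End Rays.

Theorem lemma2 (R : realType) (d : nat) (Om : set 'rV[R]_d) (T : R)
  (eta : 'rV[R]_d -> R) :
  open Om -> Om !=set0 -> 0 < T ->
  twice_differentiable eta -> convex_on_Rd eta ->
  (design_condition Om T eta <-> homogeneity eta).
Proof.
move=> _ Om_n0 T_gt0 eta_diff2 eta_convex; split.
- move=> design v; have [_ [eta0 _]] := design.
  have pd_const := pd_const_of_hess_mul_eq0 eta_diff2
    (design_condition_hess_mul_eq0 Om_n0 T_gt0 design).
  rewrite [RHS](affine_of_pd_const eta_diff2 pd_const) eta0 add0r.
  by apply: eq_bigr => i _; rewrite pd_const.
- move=> homog.
  have [c etaE] : exists c, eta = fun v => \sum_(i < d) v 0 i * c i.
    exists (fun i => pd eta i 0); apply/funext => v.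
    exact: lin_form_of_homogeneity.
  subst eta; split=> //; split.
    by rewrite big1 // => i _; rewrite mxE mul0r.
  move=> f phi _ _ _ p _; rewrite /Aterm big1 // => i _.
  by rewrite big1 ?mul0r // => j _; rewrite hess_lin_form mul0r.
Qed.
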